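(* Let $L,M$ be distributive lattices and $T:\mathrm{FBL}\langle L\rangle\to\mathrm{FBL}\langle M\rangle$ a (linear) lattice homomorphism. For $y^*\in M^*$ define $\Phi_T(y^* ):L\to\mathbb R$ by $\Phi_T(y^* )(x)=(T\delta_x)(y^* )$. Then: (1) for every $y^*\in M^*$, $\Phi_T(y^* )$ is a lattice homomorphism $L\to\mathbb R$; (2) $|\Phi_T(y^* )(x)|\le\|T\|$ for all $y^*\in M^*$, $x\in L$; in particular, if $\|T\|\le1$ then $\Phi_T(M^* )\subseteq L^*$; (3) $\Phi_T$ is positively homogeneous: if $y^*\in M^*$, $\lambda\ge0$ and $\lambda y^*\in M^*$, then $\Phi_T(\lambda y^* )=\lambda\Phi_T(y^* )$; (4) if $\|T\|\le1$, then $(Tf)(y^* )=f(\Phi_T(y^* ))$ for every $f\in\mathrm{FBL}\langle L\rangle$ and $y^*\in M^*$.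
   Context: For a distributive lattice $L$, $L^*$ is the set of all lattice homomorphisms $x^*:L\to[-1,1]$; for $x\in L$, $\delta_x:L^*\to\mathbb R$ is $\delta_x(x^* )=x^*(x)$. A function $f:L^*\to\mathbb R$ is positively homogeneous if $f(\lambda x^* )=\lambda f(x^* )$ whenever $\lambda\ge0$ and $\lambda x^*\in L^*$; for such $f$, $\|f\|=\sup\{\sum_{i=1}^m|f(x_i^* )|: m\in\mathbb N,\ x_i^*\in L^*,\ \sup_{x\in L}\sum_{i=1}^m|x_i^*(x)|\le1\}$. $\mathrm{FBL}\langle L\rangle$ is the norm closure of the vector sublattice generated by $\{\delta_x:x\in L\}$ inside the Banach lattice of positively homogeneous functions on $L^*$ with finite norm, with pointwise order and operations (so its elements are functions on $L^*$ and point evaluations are continuous). *)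

From HB Require Import structures.
From mathcomp Require Import all_boot all_order all_algebra.
From mathcomp Require Import boolp classical_sets reals constructive_ereal ereal.
Set Implicit Arguments. Unset Strict Implicit. Unset Printing Implicit Defensive.
Import Order.TTheory GRing.Theory Num.Theory.
Local Open Scope ring_scope.
Local Open Scope classical_set_scope.

Section FBL.
Variable R : realType.

Definition lattice_hom {d} (L : distrLatticeType d) (x : L -> R) : Prop :=
  forall a b : L, x (Order.meet a b) = Order.min (x a) (x b) /\
                  x (Order.join a b) = Order.max (x a) (x b).

Definition is_Lstar {d} (L : distrLatticeType d) (x : L -> R) : Prop :=
  lattice_hom x /\ forall a, `|x a| <= 1.

Definition Lstar {d} (L : distrLatticeType d) := {x : L -> R | is_Lstar x}.

Definition delta {d} {L : distrLatticeType d} (a : L) : Lstar L -> R :=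
  fun xs => proj1_sig xs a.

Definition pos_homogeneous {d} {L : distrLatticeType d} (f : Lstar L -> R) : Prop :=
  forall (x y : Lstar L) (lam : R), 0 <= lam ->
    (forall a, proj1_sig y a = lam * proj1_sig x a) -> f y = lam * f x.

Definition fbl_norm {d} {L : distrLatticeType d} (f : Lstar L -> R) : \bar R :=
  ereal_sup [set r | exists (m : nat) (xs : 'I_m -> Lstar L),
     (forall a : L, \sum_(i < m) `|proj1_sig (xs i) a| <= 1) /\
     r = (\sum_(i < m) `|f (xs i)|)%:E].

(* the ambient Banach lattice: positively homogeneous functions with finite norm *)
Definition PH {d} (L : distrLatticeType d) : set (Lstar L -> R) :=
  [set f | pos_homogeneous f /\ (fbl_norm f < +oo)%E].
Arguments PH {d} L.

Definition vector_sublattice {d} {L : distrLatticeType d} (S : set (Lstar L -> R)) : Prop :=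
  [/\ S (fun _ => 0),
      (forall f g, S f -> S g -> S (fun x => f x + g x)),
      (forall (c : R) f, S f -> S (fun x => c * f x)),
      (forall f g, S f -> S g -> S (fun x => Order.max (f x) (g x))) &
      (forall f g, S f -> S g -> S (fun x => Order.min (f x) (g x)))].

Definition gen_sublattice {d} (L : distrLatticeType d) : set (Lstar L -> R) :=
  [set f | forall S : set (Lstar L -> R), S `<=` PH L -> vector_sublattice S ->
             (forall a : L, S (delta a)) -> S f].
Arguments gen_sublattice {d} L.

Definition FBL {d} (L : distrLatticeType d) : set (Lstar L -> R) :=
  [set f | PH L f /\ forall e : R, 0 < e ->
     exists g, gen_sublattice L g /\ (fbl_norm (fun x => (f x - g x)%R) < e%:E)%E].
Arguments FBL {d} L.

Definition fbl_lattice_hom {d1 d2} {L : distrLatticeType d1} {M : distrLatticeType d2}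
  (T : (Lstar L -> R) -> (Lstar M -> R)) : Prop :=
  [/\ (forall f, FBL L f -> FBL M (T f)),
      (forall f g (a b : R), FBL L f -> FBL L g ->
          T (fun x => a * f x + b * g x) = (fun y => a * T f y + b * T g y)),
      (forall f g, FBL L f -> FBL L g ->
          T (fun x => Order.max (f x) (g x)) = (fun y => Order.max (T f y) (T g y))) &
      (forall f g, FBL L f -> FBL L g ->
          T (fun x => Order.min (f x) (g x)) = (fun y => Order.min (T f y) (T g y)))].

Definition op_norm {d1 d2} {L : distrLatticeType d1} {M : distrLatticeType d2}
  (T : (Lstar L -> R) -> (Lstar M -> R)) : \bar R :=
  ereal_sup [set fbl_norm (T f) | f in [set f | FBL L f /\ (fbl_norm f <= 1)%E]].

Definition PhiT {d1 d2} {L : distrLatticeType d1} {M : distrLatticeType d2}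
  (T : (Lstar L -> R) -> (Lstar M -> R)) (y : Lstar M) : L -> R :=
  fun a => T (delta a) y.

End FBL.
Arguments PH {R d} L.
Arguments gen_sublattice {R d} L.
Arguments FBL {R d} L.

From HB Require Import structures.
From mathcomp Require Import all_boot all_order all_algebra.
From mathcomp Require Import boolp classical_sets reals constructive_ereal ereal.
Import Order.TTheory GRing.Theory Num.Theory.
Local Open Scope ring_scope.
Local Open Scope classical_set_scope.

(* Every y^* in M^* is a lattice homomorphism, so delta_(a /\ b) = delta_a /\ delta_b
   and delta_(a \/ b) = delta_a \/ delta_b; with |h(y^* )| <= ||h|| (a single y^* is an
   admissible family) and ||delta_a|| <= 1 this gives (1)-(3).  For (4), with
   x^* := Phi_T(y^* ) the maps f |-> (T f)(y^* ) and f |-> f(x^* ) are linear lattice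
   homomorphisms agreeing on every delta_a, hence on the generated vector sublattice;
   when ||T|| <= 1 both are 1-Lipschitz for the FBL norm, so they agree on its
   closure. *)

Section FBLNorm.
Context {R : realType} {d : Order.disp_t} {L : distrLatticeType d}.
Implicit Types (f g h : Lstar R L -> R) (x : Lstar R L).

Definition admissible {m : nat} (xs : 'I_m -> Lstar R L) :=
  forall a : L, \sum_(i < m) `|proj1_sig (xs i) a| <= 1.

Lemma le_fbl_norm h {m} {xs : 'I_m -> Lstar R L} : admissible xs ->
  ((\sum_(i < m) `|h (xs i)|)%:E <= fbl_norm h)%E.
Proof. by move=> xs_adm; apply: ereal_sup_ubound; exists m, xs. Qed.

Lemma fbl_norm_leP h (B : R) : (fbl_norm h <= B%:E)%E <->
  forall m (xs : 'I_m -> Lstar R L), admissible xs -> \sum_(i < m) `|h (xs i)| <= B.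
Proof.
split=> [hB m xs xs_adm | hB].
  by rewrite -lee_fin; apply: le_trans hB; exact: le_fbl_norm.
by apply/ereal_supP => _ [m [xs [xs_adm ->]]]; rewrite lee_fin; apply: hB.
Qed.

Lemma admissible1 x : admissible (fun _ : 'I_1 => x).
Proof. by move=> a; rewrite big_ord1; case: (proj2_sig x) => _. Qed.

Lemma normr_le_fbl_norm h x : (`|h x|%:E <= fbl_norm h)%E.
Proof. by have := le_fbl_norm h (admissible1 x); rewrite big_ord1. Qed.

Lemma fbl_norm_ge0 h : (0%:E <= fbl_norm h)%E.
Proof.
have xs : 'I_0 -> Lstar R L by case.
have := le_fbl_norm h (xs := xs); rewrite big_ord0; apply=> a.
by rewrite big_ord0.
Qed.

Lemma fbl_norm_finite h : (fbl_norm h < +oo)%E <-> exists B, (fbl_norm h <= B%:E)%E.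
Proof.
split=> [|[B hB]]; last exact: le_lt_trans hB (ltry _).
have := fbl_norm_ge0 h; case: (fbl_norm h) => [r _ _| // | //].
by exists r.
Qed.

Lemma fbl_norm_le_dominated {f g h} {c1 c2 e1 e2 : R} : 0 <= c1 -> 0 <= c2 ->
  (forall x, `|h x| <= c1 * `|f x| + c2 * `|g x|) ->
  (fbl_norm f <= e1%:E)%E -> (fbl_norm g <= e2%:E)%E ->
  (fbl_norm h <= (c1 * e1 + c2 * e2)%:E)%E.
Proof.
move=> c1_ge0 c2_ge0 hfg /fbl_norm_leP nf /fbl_norm_leP ng.
apply/fbl_norm_leP => m xs xs_adm.
apply: le_trans (ler_sum _ (fun i _ => hfg (xs i))) _.
rewrite big_split /= -!mulr_sumr.
by apply: lerD; apply: ler_wpM2l => //; [apply: nf | apply: ng].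
Qed.

Lemma fbl_norm_cst0 : (fbl_norm (fun _ : Lstar R L => 0%R) <= 0%:E)%E.
Proof. by apply/fbl_norm_leP => m xs _; rewrite big1 // => i _; rewrite normr0. Qed.

Lemma PH_lift (op : R -> R -> R) (c1 c2 : R) f g : 0 <= c1 -> 0 <= c2 ->
  (forall lam u v, 0 <= lam -> op (lam * u) (lam * v) = lam * op u v) ->
  (forall u v, `|op u v| <= c1 * `|u| + c2 * `|v|) ->
  PH L f -> PH L g -> PH L (fun x => op (f x) (g x)).
Proof.
move=> c1_ge0 c2_ge0 op_hom op_le [hom_f /fbl_norm_finite[e1 nf]].
move=> [hom_g /fbl_norm_finite[e2 ng]]; split.
  by move=> x y lam lam_ge0 yE; rewrite (hom_f x y lam) // (hom_g x y lam) // op_hom.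
apply/fbl_norm_finite; exists (c1 * e1 + c2 * e2).
exact: fbl_norm_le_dominated.
Qed.

Lemma normr_max_le (u v : R) : `|Num.max u v| <= `|u| + `|v|.
Proof. by rewrite /Order.max; case: ifP => _; rewrite ?lerDl ?lerDr. Qed.

Lemma normr_min_le (u v : R) : `|Num.min u v| <= `|u| + `|v|.
Proof. by rewrite /Order.min; case: ifP => _; rewrite ?lerDl ?lerDr. Qed.

Lemma PH_vector_sublattice : vector_sublattice (PH (R:=R) L).
Proof.
split.
- split=> [x y lam _ _|]; first by rewrite mulr0.
  by apply/fbl_norm_finite; exists 0; apply: fbl_norm_cst0.
- move=> f g; apply: (@PH_lift +%R 1 1) => // [lam u v _|u v].
    by rewrite mulrDr.
  by rewrite !mul1r ler_normD.
- move=> c f PHf; apply: (@PH_lift (fun u _ => c * u) `|c| 0 f f) => //.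
    by move=> lam u v _; rewrite mulrCA.
  by move=> u v; rewrite mul0r addr0 normrM.
- move=> f g; apply: (@PH_lift Num.max 1 1) => // [lam u v lam_ge0|u v].
    by rewrite maxr_pMr.
  by rewrite !mul1r normr_max_le.
- move=> f g; apply: (@PH_lift Num.min 1 1) => // [lam u v lam_ge0|u v].
    by rewrite minr_pMr.
  by rewrite !mul1r normr_min_le.
Qed.

Lemma delta_meet (a b : L) :
  @delta R _ L (Order.meet a b) = fun x => Num.min (delta a x) (delta b x).
Proof. by apply/funext => x; case: (proj2_sig x) => /(_ a b)[]. Qed.

Lemma delta_join (a b : L) :
  @delta R _ L (Order.join a b) = fun x => Num.max (delta a x) (delta b x).
Proof. by apply/funext => x; case: (proj2_sig x) => /(_ a b)[]. Qed.

Lemma fbl_norm_delta (a : L) : (fbl_norm (@delta R _ L a) <= 1%:E)%E.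
Proof. by apply/fbl_norm_leP => m xs; apply. Qed.

Lemma PH_delta (a : L) : PH L (@delta R _ L a).
Proof.
split; first by move=> x y lam _ yE; rewrite /delta yE.
by apply/fbl_norm_finite; exists 1; apply: fbl_norm_delta.
Qed.

Lemma gen_sublattice_delta (a : L) : gen_sublattice L (@delta R _ L a).
Proof. by move=> S _ _; apply. Qed.

Lemma gen_sublattice_PH : gen_sublattice L `<=` PH (R:=R) L.
Proof. by move=> f; apply => //; [apply: PH_vector_sublattice | apply: PH_delta]. Qed.

Lemma gen_sublattice_vector_sublattice : vector_sublattice (gen_sublattice (R:=R) L).
Proof.
split=> [S _ [] // | f g gf gg S | c f gf S | f g gf gg S | f g gf gg S] PHS SS Sdelta;
  case: (SS) => _ SD SZ Smax Smin.
- by apply: SD; [apply: gf | apply: gg].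
- by apply: SZ; apply: gf.
- by apply: Smax; [apply: gf | apply: gg].
- by apply: Smin; [apply: gf | apply: gg].
Qed.

Lemma gen_sublattice_FBL {f} : gen_sublattice L f -> FBL (R:=R) L f.
Proof.
move=> gf; split=> [|e e_gt0]; first exact: gen_sublattice_PH.
exists f; split=> //.
rewrite (_ : (fun x => f x - f x) = fun=> 0); last by apply/funext => x; rewrite subrr.
by apply: le_lt_trans (fbl_norm_cst0) _; rewrite lte_fin.
Qed.

Lemma FBL_delta (a : L) : FBL L (@delta R _ L a).
Proof. exact: gen_sublattice_FBL (gen_sublattice_delta a). Qed.

Lemma FBL_lin_comb {f g} (a b : R) : FBL L f -> FBL L g ->
  FBL L (fun x => a * f x + b * g x).
Proof.
move=> [PHf approx_f] [PHg approx_g].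
have [_ PHD PHZ _ _] := PH_vector_sublattice; split=> [|e e_gt0].
  by apply: PHD; apply: PHZ.
pose k := `|a| + `|b| + 1.
have k_gt0 : 0 < k by rewrite ltr_wpDl // addr_ge0.
have [f' [gf' nf]] := approx_f _ (divr_gt0 e_gt0 k_gt0).
have [g' [gg' ng]] := approx_g _ (divr_gt0 e_gt0 k_gt0).
have [_ genD genZ _ _] := gen_sublattice_vector_sublattice.
exists (fun x => a * f' x + b * g' x); split; first by apply: genD; apply: genZ.
have dominated x : `|a * f x + b * g x - (a * f' x + b * g' x)| <=
    `|a| * `|f x - f' x| + `|b| * `|g x - g' x|.
  by rewrite -!normrM !mulrBr opprD addrACA ler_normD.
apply: le_lt_trans (fbl_norm_le_dominated (normr_ge0 a) (normr_ge0 b) dominated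
  (ltW nf) (ltW ng)) _.
rewrite lte_fin -mulrDl mulrCA gtr_pMr // ltr_pdivrMr // mul1r.
by rewrite /k ltrDl.
Qed.

Lemma FBL_scale f (c : R) : FBL L f -> FBL L (fun x => c * f x).
Proof.
move=> Ff; have := FBL_lin_comb c 0 Ff Ff.
by rewrite (_ : (fun x => _) = fun x => c * f x) //; apply/funext => x; rewrite mul0r addr0.
Qed.

Lemma FBL_sub f g : FBL L f -> FBL L g -> FBL L (fun x => f x - g x).
Proof.
move=> Ff Fg; have := FBL_lin_comb 1 (-1) Ff Fg.
by rewrite (_ : (fun x => _) = fun x => f x - g x) //; apply/funext => x; rewrite mul1r mulN1r.
Qed.

Lemma fbl_norm_scale_le {f} (c : R) {e : R} : (fbl_norm f <= e%:E)%E ->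
  (fbl_norm (fun x => (c * f x)%R) <= (`|c| * e)%R%:E)%E.
Proof.
move=> nf; rewrite -[_ * e]addr0 -(mul0r e).
by apply: (fbl_norm_le_dominated _ _ _ nf nf) => // x; rewrite mul0r addr0 normrM.
Qed.

End FBLNorm.

Section PhiT.
Context {R : realType} {d1 d2 : Order.disp_t}.
Context {L : distrLatticeType d1} {M : distrLatticeType d2}.
Context {T : (Lstar R L -> R) -> (Lstar R M -> R)}.
Hypothesis T_hom : fbl_lattice_hom T.
Implicit Types (f g : Lstar R L -> R) (y : Lstar R M).

Lemma T_FBL {f} : FBL L f -> FBL M (T f).
Proof. by case: T_hom => TF _ _ _; apply: TF. Qed.

Lemma T_lin_comb {f g} (a b : R) y : FBL L f -> FBL L g ->
  T (fun x => a * f x + b * g x) y = a * T f y + b * T g y.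
Proof. by case: T_hom => _ Tlin _ _ Ff Fg; rewrite Tlin. Qed.

Lemma T_max f g y : FBL L f -> FBL L g ->
  T (fun x => Num.max (f x) (g x)) y = Num.max (T f y) (T g y).
Proof. by case: T_hom => _ _ Tmax _ Ff Fg; rewrite Tmax. Qed.

Lemma T_min f g y : FBL L f -> FBL L g ->
  T (fun x => Num.min (f x) (g x)) y = Num.min (T f y) (T g y).
Proof. by case: T_hom => _ _ _ Tmin Ff Fg; rewrite Tmin. Qed.

Lemma T_scale f (c : R) y : FBL L f ->
  T (fun x => c * f x) y = c * T f y.
Proof.
move=> Ff; have := T_lin_comb c 0 y Ff Ff; rewrite mul0r addr0 => <-.
by congr T; apply/funext => x; rewrite mul0r addr0.
Qed.

Lemma T_add f g y : FBL L f -> FBL L g ->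
  T (fun x => f x + g x) y = T f y + T g y.
Proof.
move=> Ff Fg; have := T_lin_comb 1 1 y Ff Fg; rewrite !mul1r => <-.
by congr T; apply/funext => x; rewrite !mul1r.
Qed.

Lemma T_sub f g y : FBL L f -> FBL L g ->
  T (fun x => f x - g x) y = T f y - T g y.
Proof.
move=> Ff Fg; have := T_lin_comb 1 (-1) y Ff Fg; rewrite mul1r mulN1r => <-.
by congr T; apply/funext => x; rewrite mul1r mulN1r.
Qed.

Lemma PhiT_lattice_hom y : lattice_hom (PhiT T y).
Proof.
move=> a b; rewrite /PhiT delta_meet delta_join.
by rewrite T_min ?T_max //; apply: FBL_delta.
Qed.

Lemma normr_PhiT_le y a : (`|PhiT T y a|%:E <= op_norm T)%E.
Proof.
apply: le_trans (normr_le_fbl_norm (T (delta a)) y) _.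
apply: ereal_sup_ubound; exists (delta a) => //.
by split; [apply: FBL_delta | apply: fbl_norm_delta].
Qed.

Lemma PhiT_Lstar : (op_norm T <= 1)%E -> forall y, is_Lstar (PhiT T y).
Proof.
move=> T_le1 y; split=> [|a]; first exact: PhiT_lattice_hom.
by rewrite -lee_fin; apply: le_trans (normr_PhiT_le y a) T_le1.
Qed.

Lemma PhiT_homogeneous (y y' : Lstar R M) (lam : R) : 0 <= lam ->
  (forall b : M, proj1_sig y' b = lam * proj1_sig y b) ->
  PhiT T y' = fun a => lam * PhiT T y a.
Proof.
move=> lam_ge0 y'E; apply/funext => a.
by case: (T_FBL (FBL_delta a)) => -[T_hom_a _] _; apply: T_hom_a.
Qed.

Lemma T_zero y : T (fun=> 0) y = 0.
Proof.
have [gen0 _ _ _ _] := @gen_sublattice_vector_sublattice R _ L.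
have F0 := gen_sublattice_FBL gen0.
by move: (T_scale _ 0 y F0); rewrite !mul0r.
Qed.

Lemma T_eq_on_gen_sublattice {y} {x : Lstar R L} : proj1_sig x = PhiT T y ->
  forall {h}, gen_sublattice L h -> T h y = h x.
Proof.
move=> xE h gh; suff [] : (gen_sublattice L `&` [set f | T f y = f x]) h by [].
apply: gh => [f [gf _] | | a]; first exact: gen_sublattice_PH.
- have [gen0 genD genZ genmax genmin] := @gen_sublattice_vector_sublattice R _ L.
  split; first by split=> //=; rewrite T_zero.
  + move=> f g [gf Tf] [gg Tg]; split; first exact: genD.
    by rewrite /= T_add ?Tf ?Tg //; exact: gen_sublattice_FBL.
  + move=> c f [gf Tf]; split; first exact: genZ.
    by rewrite /= T_scale ?Tf //; exact: gen_sublattice_FBL.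
  + move=> f g [gf Tf] [gg Tg]; split; first exact: genmax.
    by rewrite /= T_max ?Tf ?Tg //; exact: gen_sublattice_FBL.
  + move=> f g [gf Tf] [gg Tg]; split; first exact: genmin.
    by rewrite /= T_min ?Tf ?Tg //; exact: gen_sublattice_FBL.
- by split; [apply: gen_sublattice_delta | rewrite /= /delta xE].
Qed.

Lemma normr_T_le y h (e : R) : (op_norm T <= 1)%E -> 0 < e ->
  FBL L h -> (fbl_norm h <= e%:E)%E -> `|T h y| <= e.
Proof.
move=> T_le1 e_gt0 Fh nh.
pose h' x := e^-1 * h x.
have einv_ge0 : 0 <= e^-1 by rewrite invr_ge0 ltW.
have nh' : (fbl_norm h' <= 1%:E)%E.
  by have := fbl_norm_scale_le e^-1 nh; rewrite ger0_norm // mulVf ?gt_eqF.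
have : (`|T h' y|%:E <= 1%:E)%E.
  apply: le_trans (normr_le_fbl_norm _ y) (le_trans _ T_le1).
  by apply: ereal_sup_ubound; exists h' => //; split=> //; apply: FBL_scale.
rewrite lee_fin T_scale // normrM ger0_norm //.
by rewrite ler_pdivrMl // mulr1.
Qed.

Lemma T_eq_on_FBL y (x : Lstar R L) f : (op_norm T <= 1)%E ->
  proj1_sig x = PhiT T y -> FBL L f -> T f y = f x.
Proof.
move=> T_le1 xE Ff; apply/eqP; rewrite -subr_eq0 -normr_le0.
apply/ler_addgt0Pr => e e_gt0; rewrite add0r.
have e2_gt0 : 0 < e / 2 by rewrite divr_gt0.
have [_ /(_ _ e2_gt0) [g [gg ng]]] := Ff.
have Fh : FBL L (fun x => f x - g x) by apply: FBL_sub => //; apply: gen_sublattice_FBL.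
have -> : T f y - f x = T (fun x => f x - g x) y - (f x - g x).
  rewrite T_sub //; last exact: gen_sublattice_FBL.
  by rewrite (T_eq_on_gen_sublattice xE gg) opprB addrA subrK.
rewrite (splitr e); apply: le_trans (ler_normB _ _) _; apply: lerD.
  exact: normr_T_le (ltW ng).
by rewrite -lee_fin; apply: le_trans (normr_le_fbl_norm _ x) (ltW ng).
Qed.

End PhiT.

Theorem mainTheorem17 (R : realType) (d1 d2 : Order.disp_t)
  (L : distrLatticeType d1) (M : distrLatticeType d2)
  (T : (Lstar R L -> R) -> (Lstar R M -> R)) :
  fbl_lattice_hom T ->
  [/\ (* (1) *)
      (forall y : Lstar R M, lattice_hom (PhiT T y)),
      (* (2) *)
      (forall (y : Lstar R M) (a : L), (`|PhiT T y a|%:E <= op_norm T)%E) /\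
      ((op_norm T <= 1)%E -> forall y : Lstar R M, is_Lstar (PhiT T y)),
      (* (3) *)
      (forall (y y' : Lstar R M) (lam : R), 0 <= lam ->
         (forall b : M, proj1_sig y' b = lam * proj1_sig y b) ->
         PhiT T y' = (fun a => lam * PhiT T y a)) &
      (* (4) *)
      ((op_norm T <= 1)%E -> forall y : Lstar R M,
         exists x : Lstar R L, proj1_sig x = PhiT T y /\
           forall f, FBL L f -> T f y = f x)].
Proof.
move=> T_hom; split.
- exact: PhiT_lattice_hom.
- split; [exact: normr_PhiT_le | exact: PhiT_Lstar].
- exact: PhiT_homogeneous.
- move=> T_le1 y; exists (exist _ _ (PhiT_Lstar T_hom T_le1 y)); split=> // f.
  exact: T_eq_on_FBL.
Qed.
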